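(* Let $A,B$ be closed linear relations in $X^2$ such that $\{A,B\}$ is a dual pair with $(A^* )_s|_{D(B)}=B_s$ and $(B^* )_s|_{D(A)}=A_s$. Then $$D(A^* )=D(B)\oplus_A N(1+B^*A^* ),\qquad D(B^* )=D(A)\oplus_B N(1+A^*B^* ).$$ In particular, if $A^*=B$ (equivalently $A=B^*$), then $N(1+B^*A^* )=\{0\}$ (equivalently $N(1+A^*B^* )=\{0\}$).
   Context: $X$ is a complex Hilbert space; $X^2=X\times X$ with the product inner product. A linear relation is a linear subspace $T\subset X^2$; $D(T)$, $N(T)=\{x:(x,0)\in T\}$, $T(x)=\{y:(x,y)\in T\}$ as usual. Adjoint: $T^*=\{(f,g):\langle g,x\rangle=\langle f,y\rangle\ \forall (x,y)\in T\}$. For closed $T$: $T_\infty=\{(0,y)\in T\}$, $T_s=T\ominus T_\infty$ is an operator with $D(T_s)=D(T)$, $R(T_s)\subset T(0)^\perp$. A pair of closed relations $\{A,B\}$ is a dual pair if $A\subset B^*$ (equivalently $B\subset A^*$). Product of relations: $CT=\{(x,z):(x,y)\in T,(y,z)\in C\text{ for some }y\}$; $1+T=\{(x,x+y):(x,y)\in T\}$, so $N(1+B^*A^* )=\{g:(g,-g)\in B^*A^*\}$. $X_{+A}$ is $D(A^* )$ with inner product $\langle f,g\rangle_{+A}=\langle f,g\rangle+\langle (A^* )_s f,(A^* )_s g\rangle$ (a Hilbert space), and $\oplus_A$ denotes orthogonal sum in $X_{+A}$; similarly $X_{+B}$, $\oplus_B$ with $B$ in place of $A$. *)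

From mathcomp Require Import all_boot all_order all_algebra complex.
From mathcomp Require Import classical_sets reals.
Set Implicit Arguments. Unset Strict Implicit. Unset Printing Implicit Defensive.
Import Order.TTheory GRing.Theory Num.Theory.
Local Open Scope ring_scope.
Local Open Scope classical_set_scope.

Section Hilbert.
Variables (R : realType) (X : lmodType R[i]) (ip : X -> X -> R[i]).

Definition nsq (x : X) : R := complex.Re (ip x x).

Definition conv_to (u : nat -> X) (x : X) : Prop :=
  forall e : R, 0 < e -> exists N : nat, forall n : nat, (N <= n)%N -> nsq (u n - x) < e.

Definition cauchy (u : nat -> X) : Prop :=
  forall e : R, 0 < e -> exists N : nat, forall m n : nat,
    (N <= m)%N -> (N <= n)%N -> nsq (u m - u n) < e.

Definition is_hilbert : Prop :=
  [/\ (forall (a : R[i]) (x y z : X), ip (a *: x + y) z = a * ip x z + ip y z),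
      (forall x y : X, ip y x = (ip x y)^*),
      (forall x : X, 0 <= ip x x),
      (forall x : X, ip x x = 0 -> x = 0)
    & (forall u : nat -> X, cauchy u -> exists x : X, conv_to u x)].

Definition linrel (T : set (X * X)) : Prop :=
  [/\ T (0, 0),
      (forall p q, T p -> T q -> T (p.1 + q.1, p.2 + q.2))
    & (forall (a : R[i]) p, T p -> T (a *: p.1, a *: p.2))].

Definition closed_rel (T : set (X * X)) : Prop :=
  forall (u : nat -> X * X) (x y : X), (forall n, T (u n)) ->
    conv_to (fun n => (u n).1) x -> conv_to (fun n => (u n).2) y -> T (x, y).

Definition closed_linrel (T : set (X * X)) : Prop := linrel T /\ closed_rel T.

Definition ip2 (p q : X * X) : R[i] := ip p.1 q.1 + ip p.2 q.2.

Definition dom (T : set (X * X)) : set X := [set x | exists y, T (x, y)].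
Definition ker (T : set (X * X)) : set X := [set x | T (x, 0)].

Definition adj (T : set (X * X)) : set (X * X) :=
  [set fg | forall xy, T xy -> ip fg.2 xy.1 = ip fg.1 xy.2].

Definition rel_inf (T : set (X * X)) : set (X * X) :=
  [set p | T p /\ p.1 = 0].

(* T_s = T (-) T_oo, orthogonal complement of T_oo in T w.r.t. ip2 *)
Definition rel_s (T : set (X * X)) : set (X * X) :=
  [set p | T p /\ forall q, rel_inf T q -> ip2 p q = 0].

Definition dual_pair (A B : set (X * X)) : Prop :=
  closed_linrel A /\ closed_linrel B /\ A `<=` adj B.

Definition rel_comp (C T : set (X * X)) : set (X * X) :=
  [set xz | exists y, T (xz.1, y) /\ C (y, xz.2)].

(* N(1 + T) = {g | (g, -g) in T} *)
Definition ker_one_plus (T : set (X * X)) : set X := [set g | T (g, - g)].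

Definition rel_restrict (T : set (X * X)) (D : set X) : set (X * X) :=
  [set p | T p /\ D p.1].

(* orthogonality in X_{+A}: <f,g>_{+A} = <f,g> + <(A^* )_s f, (A^* )_s g> = 0 *)
Definition orth_plus (A : set (X * X)) (f g : X) : Prop :=
  forall f' g' : X, rel_s (adj A) (f, f') -> rel_s (adj A) (g, g') ->
    ip f g + ip f' g' = 0.

(* S = M (+)_A N : orthogonal sum in X_{+A} *)
Definition orth_sum_plus (A : set (X * X)) (S M N : set X) : Prop :=
  S `<=` dom (adj A) /\
  S = [set x | exists m n, M m /\ N n /\ x = m + n] /\
  (forall m n, M m -> N n -> orth_plus A m n).

End Hilbert.

From Pilot Require Import Defs.
From mathcomp Require Import all_boot all_order all_algebra complex.
From mathcomp Require Import classical_sets reals boolp ring lra.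
Set Implicit Arguments. Unset Strict Implicit. Unset Printing Implicit Defensive.
Import Order.TTheory GRing.Theory Num.Theory.
Local Open Scope ring_scope.
Local Open Scope classical_set_scope.

(* Since [B] is a closed subspace of the Hilbert space [X^2], every [(x, g)] in
   [A^*] is [(b1, b2) + (n, k)] with [(b1, b2)] in [B] and [(n, k)] orthogonal
   to [B], which means [(k, -n)] in [B^*]; as [B <= A^*], also [(n, k)] in
   [A^*], so [n] lies in [N(1 + B^* A^* )].  The two summands are orthogonal in
   [X_{+A}] because [(A^* )_s] agrees with [B_s] on [D(B)]: pairing the
   [B]-graph of [m] against [(k, -n)] in [B^*] cancels [<m, n>].  If [A^* = B]
   and [(g, y)] in [B], [(y, -g)] in [B^*], then [<y, y> = - <g, g>], so
   [g = 0]. *)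

Section ComplexRe.
Variable R : rcfType.
Implicit Types (x : R[i]) (t : R).

Lemma Re_conj x : complex.Re (Num.conj x) = complex.Re x.
Proof. by case: x. Qed.

Lemma Re_realM t x : complex.Re (t%:C%C * x) = t * complex.Re x.
Proof. by case: x => a b /=; rewrite mul0r subr0. Qed.

Lemma Re_conj_realM t x : complex.Re (Num.conj t%:C%C * x) = t * complex.Re x.
Proof. by case: x => a b /=; rewrite oppr0 mul0r subr0. Qed.

Lemma Re_conjiM x : complex.Re (Num.conj 'i%C * x) = complex.Im x.
Proof. by case: x => a b /=; rewrite mul0r mulN1r sub0r opprK. Qed.

Lemma ge0_complexRe x : 0 <= x -> 0 <= complex.Re x /\ x = (complex.Re x)%:C%C.
Proof. by case: x => a b; rewrite lecE /= => /andP[/eqP -> ]. Qed.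

End ComplexRe.

Section InnerProduct.
Variables (R : realType) (V : lmodType R[i]) (q : V -> V -> R[i]).
Hypothesis hq : is_hilbert q.
Local Notation nsq := (nsq q).

Lemma ip_conj x y : q y x = Num.conj (q x y).
Proof. by case: hq. Qed.

Lemma ipDl x y z : q (x + y) z = q x z + q y z.
Proof. by case: hq => lin _ _ _ _; rewrite -[x]scale1r lin mul1r scale1r. Qed.

Lemma ip0l z : q 0 z = 0.
Proof. by apply/(addIr (q 0 z)); rewrite -ipDl !add0r. Qed.

Lemma ipZl a x z : q (a *: x) z = a * q x z.
Proof. by case: hq => lin _ _ _ _; rewrite -[a *: x]addr0 lin ip0l addr0. Qed.

Lemma ipNl x z : q (- x) z = - q x z.
Proof. by rewrite -scaleN1r ipZl mulN1r. Qed.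

Lemma ipBl x y z : q (x - y) z = q x z - q y z.
Proof. by rewrite ipDl ipNl. Qed.

Lemma ipDr x y z : q z (x + y) = q z x + q z y.
Proof. by rewrite !(ip_conj _ z) ipDl rmorphD. Qed.

Lemma ipNr x z : q z (- x) = - q z x.
Proof. by rewrite !(ip_conj _ z) ipNl rmorphN. Qed.

Lemma ipBr x y z : q z (x - y) = q z x - q z y.
Proof. by rewrite ipDr ipNr. Qed.

Lemma ipZr a x z : q z (a *: x) = Num.conj a * q z x.
Proof. by rewrite !(ip_conj _ z) ipZl rmorphM. Qed.

Lemma ip0r z : q z 0 = 0.
Proof. by rewrite ip_conj ip0l rmorph0. Qed.

Lemma nsq_ge0 x : 0 <= nsq x.
Proof. by case: hq => _ _ pos _ _; case: (ge0_complexRe (pos x)). Qed.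

Lemma ip_nsq x : q x x = (nsq x)%:C%C.
Proof. by case: hq => _ _ pos _ _; case: (ge0_complexRe (pos x)). Qed.

Lemma nsq_eq0 x : nsq x = 0 -> x = 0.
Proof. by case: hq => _ _ _ def _ h; apply: def; rewrite ip_nsq h. Qed.

Lemma eq0_ip_oppr x y : q x x = - q y y -> x = 0.
Proof.
rewrite !ip_nsq -rmorphN => /complexI hxy; apply: nsq_eq0.
by apply/eqP; rewrite eq_le nsq_ge0 andbT hxy oppr_le0 nsq_ge0.
Qed.

Lemma nsqD x y : nsq (x + y) = nsq x + nsq y + 2 * complex.Re (q x y).
Proof.
rewrite /Defs.nsq ipDl !ipDr !raddfD /= (ip_conj x y) Re_conj; lra.
Qed.

Lemma nsqN x : nsq (- x) = nsq x.
Proof. by rewrite /Defs.nsq ipNl ipNr opprK. Qed.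

Lemma nsqB x y : nsq (x - y) = nsq x + nsq y - 2 * complex.Re (q x y).
Proof. rewrite nsqD nsqN ipNr raddfN /=; lra. Qed.

Lemma Re_ipZl t x y : complex.Re (q (t%:C%C *: x) y) = t * complex.Re (q x y).
Proof. by rewrite ipZl Re_realM. Qed.

Lemma Re_ipZr t x y : complex.Re (q x (t%:C%C *: y)) = t * complex.Re (q x y).
Proof. by rewrite ipZr Re_conj_realM. Qed.

Lemma nsqZ t x : nsq (t%:C%C *: x) = t ^+ 2 * nsq x.
Proof. by rewrite /Defs.nsq Re_ipZl Re_ipZr mulrA expr2. Qed.

Lemma parallelogram x y : nsq (x + y) + nsq (x - y) = 2 * nsq x + 2 * nsq y.
Proof. rewrite nsqD nsqB; lra. Qed.

(* Expand [0 <= nsq (t x - y)]. *)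
Lemma Re_ip_le t x y : 0 < t -> 2 * complex.Re (q x y) <= t * nsq x + nsq y / t.
Proof.
move=> t_gt0; rewrite -(ler_pM2l t_gt0) mulrDr [t * (_ / t)]mulrC divfK ?gt_eqF //.
have := nsq_ge0 (t%:C%C *: x - y); rewrite nsqB nsqZ Re_ipZl expr2; lra.
Qed.

Lemma nsqD_le t x y : 0 < t -> nsq (x + y) <= (1 + t) * nsq x + (1 + t^-1) * nsq y.
Proof. move=> t_gt0; have := Re_ip_le x y t_gt0; rewrite nsqD; lra. Qed.

End InnerProduct.

Lemma eq0_of_le_quadratic (R : realFieldType) (r K : R) :
  0 <= K -> (forall t, 2 * t * r <= t ^+ 2 * K) -> r = 0.
Proof.
move=> K_ge0 le_rK; have hK1 : K + 1 != 0 by rewrite gt_eqF //; lra.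
have rE : r = r / (K + 1) * (K + 1) by rewrite divfK.
move: (r / (K + 1)) rE => t rE; have := le_rK t; rewrite rE => ht.
have -> : t = 0 by nra.
by rewrite mul0r.
Qed.

Lemma invSn_lt (R : archiRealFieldType) (e : R) : 0 < e ->
  exists N, forall n, (N <= n)%N -> (n.+1%:R^-1 : R) < e.
Proof.
move=> e_gt0; exists (Num.bound e^-1) => n le_Nn.
have /archi_boundP lt_inv : 0 <= e^-1 by rewrite invr_ge0 ltW.
rewrite -[e]invrK ltf_pV2 ?posrE ?invr_gt0 ?ltr0n //.
by apply: (lt_le_trans lt_inv); rewrite ler_nat leqW.
Qed.

Section BestApproximation.
Variables (R : realType) (V : lmodType R[i]) (q : V -> V -> R[i]).
Hypothesis hq : is_hilbert q.
Local Notation nsq := (nsq q).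
Variable S : set V.
Hypotheses (S0 : S 0) (SD : forall x y, S x -> S y -> S (x + y))
  (SZ : forall a x, S x -> S (a *: x))
  (Scl : forall u x, (forall n, S (u n)) -> conv_to q u x -> S x).
Variable p : V.

Lemma best_approx_orth s : S s -> (forall w, S w -> nsq (p - s) <= nsq (p - w)) ->
  forall w, S w -> q (p - s) w = 0.
Proof.
move=> Ss s_min.
have Re0 w : S w -> complex.Re (q (p - s) w) = 0.
  move=> Sw; apply: (eq0_of_le_quadratic (nsq_ge0 hq w)) => t.
  have := s_min _ (SD Ss (SZ t%:C%C Sw)).
  by rewrite opprD addrA [nsq (_ - t%:C%C *: w)](nsqB hq) (nsqZ hq) (Re_ipZr hq); lra.
move=> w Sw; have := Re0 _ (SZ 'i%C Sw); rewrite (ipZr hq) Re_conjiM.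
by move: (Re0 _ Sw); case: (q (p - s) w) => a b /= -> ->.
Qed.

Definition dist2 := inf [set nsq (p - s) | s in S].

Lemma dist2_has_inf : has_inf [set nsq (p - s) | s in S].
Proof.
split; first by exists (nsq (p - 0)), 0.
by exists 0 => _ [s _ <-]; apply: nsq_ge0.
Qed.

Lemma dist2_le s : S s -> dist2 <= nsq (p - s).
Proof. by move=> Ss; apply: (ge_inf dist2_has_inf.2); exists s. Qed.

Lemma dist2_ge0 : 0 <= dist2.
Proof.
by apply: lb_le_inf dist2_has_inf.1 _ => _ [s _ <-]; apply: nsq_ge0.
Qed.

Lemma dist2_approx e : 0 < e -> exists2 s, S s & nsq (p - s) < dist2 + e.
Proof. by move=> e_gt0; have [_ [s Ss <-]] := inf_adherent e_gt0 dist2_has_inf; exists s. Qed.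

(* Parallelogram law at the midpoint of [s1] and [s2], which lies in [S]. *)
Lemma nsqB_le_dist2 s1 s2 : S s1 -> S s2 ->
  nsq (s1 - s2) <= 2 * (nsq (p - s1) - dist2) + 2 * (nsq (p - s2) - dist2).
Proof.
move=> Ss1 Ss2; have := dist2_le (SZ (2^-1 : R)%:C%C (SD Ss1 Ss2)).
have mid : (p - s1) + (p - s2) = 2%:R%:C%C *: (p - (2^-1 : R)%:C%C *: (s1 + s2)).
  rewrite scalerBr scalerA -rmorphM mulfV ?pnatr_eq0 // scale1r.
  by rewrite rmorph_nat scaler_nat mulr2n opprD addrACA.
have := parallelogram hq (p - s1) (p - s2).
have -> : p - s1 - (p - s2) = - (s1 - s2) by rewrite opprB addrC addrA subrK opprB.
rewrite mid (nsqZ hq) (nsqN hq) expr2; lra.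
Qed.

Section MinimizingSequence.
Variable u : nat -> V.
Hypothesis Su : forall n, S (u n).
Hypothesis u_min : forall n, nsq (p - u n) < dist2 + n.+1%:R^-1.

Lemma minimizing_cauchy : cauchy q u.
Proof.
move=> e e_gt0; have [N ltN] := @invSn_lt _ (e / 4) ltac:(lra).
exists N => m n le_Nm le_Nn; have := nsqB_le_dist2 (Su m) (Su n).
have := u_min m; have := u_min n; have := ltN m le_Nm; have := ltN n le_Nn.
move: (m.+1%:R^-1) (n.+1%:R^-1) => Xm Xn; lra.
Qed.

Lemma minimizing_limit s : conv_to q u s -> nsq (p - s) <= dist2.
Proof.
move=> us; apply/ler_addgt0Pr => e e_gt0.
have d_ge0 := dist2_ge0; set t := e / (3 * (dist2 + 1)).
have t_gt0 : 0 < t by rewrite divr_gt0 //; lra.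
have te : t * (dist2 + 1) = e / 3 by rewrite /t; field; lra.
have tV_gt0 : 0 < 1 + t^-1 by rewrite addr_gt0 ?invr_gt0.
have [N1 ltN1] := us (e / 3 / (1 + t^-1)) ltac:(by rewrite !divr_gt0).
have [N2 ltN2] := @invSn_lt _ (e / 3) ltac:(lra).
set n := maxn N1 N2.
have := ltN1 n (leq_maxl _ _); rewrite ltr_pdivlMr // => lt_s.
have := nsqD_le hq (p - u n) (u n - s) t_gt0; rewrite addrA subrK.
have := u_min n; have := ltN2 n (leq_maxr _ _).
have : n.+1%:R^-1 <= 1 :> R by rewrite invf_le1 ?ltr0n // ler1n.
move: (n.+1%:R^-1) => X; nra.
Qed.

End MinimizingSequence.

Lemma best_approx_exists : exists2 s, S s & forall w, S w -> nsq (p - s) <= nsq (p - w).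
Proof.
have approx n : exists s, S s /\ nsq (p - s) < dist2 + n.+1%:R^-1.
  have /dist2_approx[s Ss lt_s] : 0 < n.+1%:R^-1 :> R by rewrite invr_gt0.
  by exists s.
have [u /all_and2[Su u_min]] := choice approx.
have [s us] : exists s, conv_to q u s.
  by case: hq => _ _ _ _; apply; apply: minimizing_cauchy u_min.
exists s; first exact: Scl us.
by move=> w Sw; apply: le_trans (minimizing_limit u_min us) (dist2_le Sw).
Qed.

Theorem orth_decomposition : exists2 s, S s & forall w, S w -> q (p - s) w = 0.
Proof.
by have [s Ss s_min] := best_approx_exists; exists s => //; apply: best_approx_orth.
Qed.

End BestApproximation.

Section ProductSpace.
Variables (R : realType) (X : lmodType R[i]) (ip : X -> X -> R[i]).
Hypothesis hip : is_hilbert ip.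

Lemma nsq_ip2 (p : X * X) : nsq (ip2 ip) p = nsq ip p.1 + nsq ip p.2.
Proof. by rewrite /nsq /ip2 raddfD. Qed.

Lemma conv_to_ip2 (u : nat -> X * X) (x : X * X) :
  conv_to (ip2 ip) u x <->
  conv_to ip (fun n => (u n).1) x.1 /\ conv_to ip (fun n => (u n).2) x.2.
Proof.
split=> [ux | [ux1 ux2] e e_gt0].
  split=> e /ux[N ltN]; exists N => n /ltN; rewrite nsq_ip2 /=.
    by have := nsq_ge0 hip ((u n).2 - x.2); lra.
  by have := nsq_ge0 hip ((u n).1 - x.1); lra.
have [N1 ltN1] := ux1 (e / 2) ltac:(lra); have [N2 ltN2] := ux2 (e / 2) ltac:(lra).
exists (maxn N1 N2) => n; rewrite geq_max => /andP[/ltN1 lt1 /ltN2 lt2].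
by rewrite nsq_ip2 /=; lra.
Qed.

Lemma cauchy_ip2 (u : nat -> X * X) : cauchy (ip2 ip) u ->
  cauchy ip (fun n => (u n).1) /\ cauchy ip (fun n => (u n).2).
Proof.
move=> uc; split=> e /uc[N ltN]; exists N => m n le_Nm le_Nn;
  have := ltN m n le_Nm le_Nn; rewrite nsq_ip2 /=.
  by have := nsq_ge0 hip ((u m).2 - (u n).2); lra.
by have := nsq_ge0 hip ((u m).1 - (u n).1); lra.
Qed.

Lemma hilbert_ip2 : is_hilbert (ip2 ip).
Proof.
case: (hip) => lin herm pos def complete; split.
- by move=> a x y z; rewrite /ip2 /= !lin; ring.
- by move=> x y; rewrite /ip2 herm (herm x.2) rmorphD.
- by move=> x; rewrite addr_ge0.
- move=> [x1 x2] /eqP; rewrite /ip2 /= paddr_eq0 // => /andP[/eqP/def -> /eqP/def ->] //.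
- move=> u /cauchy_ip2[/complete[x1 ux1] /complete[x2 ux2]].
  by exists (x1, x2); apply/conv_to_ip2.
Qed.

Lemma closed_linrel_orth_decomposition (T : set (X * X)) : closed_linrel ip T ->
  forall p, exists2 t, T t & forall w, T w -> ip2 ip (p - t) w = 0.
Proof.
move=> [[T0 TD TZ] Tcl]; apply: (orth_decomposition hilbert_ip2 T0).
- by move=> [x1 x2] [y1 y2]; apply: TD.
- by move=> a [x1 x2]; apply: TZ.
- by move=> u [x1 x2] Tu /conv_to_ip2[ux1 ux2]; apply: Tcl ux1 ux2.
Qed.

End ProductSpace.

Section Adjoint.
Variables (R : realType) (X : lmodType R[i]) (ip : X -> X -> R[i]).
Hypothesis hip : is_hilbert ip.
Implicit Types (T A B : set (X * X)) (f g : X).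

Lemma adj00 T : adj ip T (0, 0).
Proof. by move=> [x y] _ /=; rewrite !(ip0l hip). Qed.

Lemma adjD T f g f' g' :
  adj ip T (f, g) -> adj ip T (f', g') -> adj ip T (f + f', g + g').
Proof. by move=> fg fg' [x y] Txy /=; rewrite !(ipDl hip) (fg _ Txy) (fg' _ Txy). Qed.

Lemma adjB T f g f' g' :
  adj ip T (f, g) -> adj ip T (f', g') -> adj ip T (f - f', g - g').
Proof. by move=> fg fg' [x y] Txy /=; rewrite !(ipBl hip) (fg _ Txy) (fg' _ Txy). Qed.

Lemma sub_adj_sym A B : A `<=` adj ip B -> B `<=` adj ip A.
Proof.
move=> AB [f g] Bfg [x y] Axy /=.
by rewrite (ip_conj hip x) (ip_conj hip y) (AB _ Axy (f, g) Bfg).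
Qed.

Lemma orth_adj T f g : (forall w, T w -> ip2 ip (f, g) w = 0) -> adj ip T (g, - f).
Proof.
move=> orth [x y] Txy /=; apply/eqP; rewrite (ipNl hip) eq_sym -subr_eq0 opprK addrC.
by have := orth _ Txy; rewrite /ip2 /= => ->.
Qed.

Lemma ker_one_plus_comp_adj T : T (0, 0) ->
  ker_one_plus (rel_comp (adj ip T) T) = [set 0].
Proof.
move=> T0; apply/seteqP; split=> g /=; last first.
  by move->; exists 0; rewrite oppr0; split=> //; apply: adj00.
move=> [y [Tgy adj_y]]; apply: (eq0_ip_oppr hip (y := y)).
by rewrite -(adj_y _ Tgy) (ipNl hip) opprK.
Qed.

Lemma ker_one_plus_adj_comp T : T (0, 0) ->
  ker_one_plus (rel_comp T (adj ip T)) = [set 0].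
Proof.
move=> T0; apply/seteqP; split=> g /=; last first.
  by move->; exists 0; rewrite oppr0; split=> //; apply: adj00.
move=> [y [adj_gy Ty]]; apply: (eq0_ip_oppr hip (y := y)).
by have /= := adj_gy _ Ty; rewrite (ipNr hip) => ->; rewrite opprK.
Qed.

End Adjoint.

Section OrthogonalSum.
Variables (R : realType) (X : lmodType R[i]) (ip : X -> X -> R[i]).
Hypothesis hip : is_hilbert ip.
Variables A B : set (X * X).
Local Notation N := (ker_one_plus (rel_comp (adj ip B) (adj ip A))).

Lemma dom_adj_decomposition : closed_linrel ip B -> B `<=` adj ip A ->
  dom (adj ip A) = [set x | exists m n, dom B m /\ N n /\ x = m + n].
Proof.
move=> B_cl BA; apply/seteqP; split=> x /=.
- move=> [g Axg].
  have [[b1 b2] Bb orth] := closed_linrel_orth_decomposition hip B_cl (x, g).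
  exists b1, (x - b1); split; first by exists b2.
  split; last by rewrite addrC subrK.
  exists (g - b2); split=> /=; first exact: (adjB hip Axg (BA _ Bb)).
  exact: (orth_adj hip orth).
- move=> [m [n [[h Bmh] [[y [Any Bny]] ->]]]]; exists (h + y).
  exact: (adjD hip (BA _ Bmh) Any).
Qed.

Lemma orth_plus_dom_ker : rel_restrict (rel_s ip (adj ip A)) (dom B) = rel_s ip B ->
  forall m n, dom B m -> N n -> orth_plus ip A m n.
Proof.
move=> resA m n [h Bmh] [y [Any Bny]] f' g' Amf' Ang'.
have [Bmf' _] : rel_s ip B (m, f') by rewrite -resA; split=> //; exists h.
have nm_yf' : ip (- n) m = ip y f' := Bny _ Bmf'.
have A_inf : rel_inf (adj ip A) (0, y - g').
  by split=> //; have := adjB hip Any Ang'.1; rewrite subrr.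
have := Amf'.2 _ A_inf; rewrite /ip2 /= (ip0r hip) add0r (ipBr hip) => /subr0_eq <-.
by rewrite (ip_conj hip y) -nm_yf' (ipNl hip) rmorphN (ip_conj hip n) subrr.
Qed.

Lemma orth_sum_dom_adj : closed_linrel ip B -> B `<=` adj ip A ->
  rel_restrict (rel_s ip (adj ip A)) (dom B) = rel_s ip B ->
  orth_sum_plus ip A (dom (adj ip A)) (dom B) N.
Proof.
move=> B_cl BA resA; split=> //; split; first exact: dom_adj_decomposition.
exact: orth_plus_dom_ker.
Qed.

End OrthogonalSum.

Theorem lemma2p2 (R : realType) (X : lmodType R[i]) (ip : X -> X -> R[i])
  (A B : set (X * X)) :
  is_hilbert ip ->
  dual_pair ip A B ->
  rel_restrict (rel_s ip (adj ip A)) (dom B) = rel_s ip B ->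
  rel_restrict (rel_s ip (adj ip B)) (dom A) = rel_s ip A ->
  [/\ orth_sum_plus ip A (dom (adj ip A)) (dom B)
        (ker_one_plus (rel_comp (adj ip B) (adj ip A))),
      orth_sum_plus ip B (dom (adj ip B)) (dom A)
        (ker_one_plus (rel_comp (adj ip A) (adj ip B)))
    & (adj ip A = B ->
        ker_one_plus (rel_comp (adj ip B) (adj ip A)) = [set 0] /\
        ker_one_plus (rel_comp (adj ip A) (adj ip B)) = [set 0])].
Proof.
move=> hip [A_cl [B_cl AB]] resA resB.
have BA := sub_adj_sym hip AB.
split; [exact: orth_sum_dom_adj | exact: orth_sum_dom_adj |].
have [[B0 _ _] _] := B_cl.
move=> AB_eq; rewrite AB_eq.
by split; [exact: ker_one_plus_comp_adj | exact: ker_one_plus_adj_comp].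
Qed.
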